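(* For all integers $n\ge0$ and $0\le k\le n$, $$\sum_{i=0}^{\lfloor\frac{n+1}{2}\rfloor}\frac{(-1)^i}{n+1-i}\binom{n+1-i}{i}\binom{2n-2k-2i}{n-k-i} = \frac{(-1)^{n-k}}{n+1}\binom{k}{n-k}.$$ In particular the left-hand side vanishes when $2k<n$.
   Context: Binomial coefficients use the convention $\binom{a}{b}=0$ if $b<0$ or $b>a$ (in particular $\binom{2m}{m}=0$ for $m<0$). *)

From HB Require Import structures.
From mathcomp Require Import all_boot all_order all_algebra.
Set Implicit Arguments. Unset Strict Implicit. Unset Printing Implicit Defensive.
Import Order.TTheory GRing.Theory Num.Theory.
Local Open Scope ring_scope.

Definition binZ (a b : int) : rat :=
  if (0 <= b) && (b <= a) then ('C(`|a|%N, `|b|%N))%:R else 0.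

From HB Require Import structures.
From mathcomp Require Import all_boot all_order all_algebra.
From mathcomp Require Import zify ring lra.
Import Order.TTheory GRing.Theory Num.Theory.
Local Open Scope ring_scope.

(* Write m = n - k.  The factor (n+1)/(n+1-i) * C(n+1-i, i) is the coefficient
   [lucas N i] of x^i in the Lucas polynomial L_N, N = n+1, defined by
   L_0 = 2, L_1 = 1, L_{N+2} = L_{N+1} + x L_N.  Hence, up to the factor
   1/(n+1), the left-hand side is the alternating convolution
       conv N m = sum_(i <= m) (-1)^i [lucas N i] C(2(m-i), m-i).
   The Lucas recurrence gives conv (N+2) (m+1) = conv (N+1) (m+1) - conv N m,
   and the explicit function
       conv_value N m = (-1)^m C(N-1-m, m)   if m < N,
                        2 C(2m-N, m)         otherwise
   satisfies the same recurrence and the same initial values, so the two agree.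
   For N = n+1 and m = n-k < N this is (-1)^(n-k) C(k, n-k), which vanishes
   when 2k < n. *)

Fixpoint lucas (N i : nat) : nat :=
  match N with
  | 0 => if i is 0 then 2 else 0
  | 1 => if i is 0 then 1 else 0
  | S ((S N'') as N') =>
      if i is S i' then (lucas N' (S i') + lucas N'' i')%N else 1
  end.

Lemma lucasSS N i : lucas N.+2 i.+1 = (lucas N.+1 i.+1 + lucas N i)%N.
Proof. by []. Qed.

Lemma lucas_i0 N : (0 < N)%N -> lucas N 0 = 1%N.
Proof. by case: N => [|[|]]. Qed.

Lemma lucas_eq0 N i : (0 < i)%N -> (N <= i)%N -> lucas N i = 0%N.
Proof.
elim/ltn_ind: N i => -[|[|P]] IH [|i] // _ hPi.
by rewrite lucasSS !IH //; lia.
Qed.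

Definition lucas_closed (N i : nat) : rat :=
  N%:R / (N - i)%:R * 'C(N - i, i)%:R.

Lemma lucas_closed_rec N i : (i < N)%N ->
  lucas_closed N.+2 i.+1 = lucas_closed N.+1 i.+1 + lucas_closed N i.
Proof.
move=> hiN; rewrite /lucas_closed.
have [a ->] : exists a, N = (a.+1 + i)%N by exists (N - i).-1; lia.
have -> : ((a.+1 + i).+2 - i.+1 = a.+2)%N by lia.
have -> : ((a.+1 + i).+1 - i.+1 = a.+1)%N by lia.
have -> : ((a.+1 + i) - i = a.+1)%N by lia.
have pascal : 'C(a.+1, i.+1)%:R = 'C(a.+2, i.+1)%:R - 'C(a.+1, i)%:R :> rat.
  by rewrite (binS a.+1) natrD addrK.
have absorb : 'C(a.+2, i.+1)%:R = a.+2%:R / i.+1%:R * 'C(a.+1, i)%:R :> rat.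
  by rewrite mulrAC -natrM mul_bin_diag natrM [_ * 'C(_, _)%:R]mulrC mulfK ?pnatr_eq0.
rewrite pascal absorb.
have succE n : n.+1%:R = n%:R + 1 :> rat by rewrite -addn1 natrD.
rewrite !succE natrD ?succE.
have ha : 0 <= a%:R :> rat by exact: ler0n.
have hi : 0 <= i%:R :> rat by exact: ler0n.
field; lra.
Qed.

Lemma lucasE N i : (i < N)%N -> (lucas N i)%:R = lucas_closed N i.
Proof.
elim/ltn_ind: N i => -[|[|P]] IH [|i] // hi.
  by rewrite /lucas_closed lucas_i0 // subn0 bin0 divff ?mulr1 // pnatr_eq0.
rewrite lucasSS natrD.
have [hiP|hPi] := ltnP i P.
  by rewrite !IH ?lucas_closed_rec //; lia.
(* the coefficient of x^(P+1) in L_(P+2) is that of x^P in L_P: 2 if P = 0, else 0 *)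
have -> : i = P by lia.
rewrite /lucas_closed lucas_eq0 // subSn // subnn /= add0r.
case: P {IH hi hPi} => [|p]; first by rewrite divr1 mulr1.
by rewrite lucas_eq0 // bin_small // mulr0.
Qed.

Definition cbin (j : nat) : rat := 'C((2 * j)%N, j)%:R.

Definition conv (N m : nat) : rat :=
  \sum_(i < m.+1) (-1) ^+ i * (lucas N i)%:R * cbin (m - i).

Definition conv_value (N m : nat) : rat :=
  if (m < N)%N then (-1) ^+ m * 'C(N.-1 - m, m)%:R
  else 2 * 'C((2 * m - N)%N, m)%:R.

Lemma conv_rec N m : conv N.+2 m.+1 = conv N.+1 m.+1 - conv N m.
Proof.
rewrite /conv [LHS]big_ord_recl [X in _ = X - _]big_ord_recl !lucas_i0 //.
pose shifted j := (-1) ^+ j.+1 * (lucas N.+1 j.+1)%:R * cbin (m - j).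
pose lower j := (-1) ^+ j * (lucas N j)%:R * cbin (m - j).
rewrite (eq_bigr (fun j : 'I_m.+1 => shifted j - lower j)); last first.
  by move=> j _; rewrite lift0 lucasSS natrD subSS /shifted /lower exprS; ring.
by rewrite sumrB addrA.
Qed.

(* [conv_value] satisfies the same recurrence, by Pascal's rule in each regime. *)
Lemma conv_value_rec N m :
  conv_value N.+2 m.+1 = conv_value N.+1 m.+1 - conv_value N m.
Proof.
rewrite /conv_value !ltnS.
have [mN|Nm|<-] := ltngtP m N.
-
  have [r ->] : exists r, N = (m + r.+1)%N by exists (N - m).-1; lia.
  have -> : ((m + r.+1).+1 - m.+1 = r.+1)%N by lia.
  have -> : ((m + r.+1) - m.+1 = r)%N by lia.
  have -> : ((m + r.+1).-1 - m = r)%N by lia.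
  by rewrite binS natrD exprS; ring.
-
  have [r ->] : exists r, m = (N + r.+1)%N by exists (m - N).-1; lia.
  have -> : (2 * (N + r.+1).+1 - N.+2 = (N + r.+1) + r.+1)%N by lia.
  have -> : (2 * (N + r.+1).+1 - N.+1 = ((N + r.+1) + r.+1).+1)%N by lia.
  have -> : (2 * (N + r.+1) - N = (N + r.+1) + r.+1)%N by lia.
  by rewrite binS natrD; ring.
- (* m = N: the boundary values C(0, m+1) = 0 and C(m+1, m+1) = C(m, m) *)
  have -> : (m.+2.-1 - m.+1 = 0)%N by lia.
  have -> : (2 * m.+1 - m.+1 = m.+1)%N by lia.
  have -> : (2 * m - m = m)%N by lia.
  by rewrite !binn bin0n mulr0 subrr.
Qed.

(* Initial values: L_0 = 2 and L_1 = 1 are constants. *)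
Lemma conv_lucas01 N m : (N <= 1)%N -> conv N m = (2 - N%:R) * cbin m.
Proof.
move=> hN; rewrite /conv big_ord_recl big1 ?addr0 => [|j _].
  by rewrite subn0 expr0 mul1r; case: N hN => [|[|]].
by rewrite lift0; case: N hN => [|[|]] // _; rewrite mulr0 mul0r.
Qed.

Lemma conv_valueE N m : conv N m = conv_value N m.
Proof.
elim/ltn_ind: N m => -[|[|P]] IH m.
- by rewrite conv_lucas01 // /conv_value subn0 subr0.
- rewrite conv_lucas01 // /conv_value /cbin.
  case: m => [|q]; first by rewrite !bin0 /=; lra.
  (* C(2q+2, q+1) = C(2q+1, q+1) + C(2q+1, q) = 2 C(2q+1, q+1), by symmetry *)
  have -> : (2 * q.+1 = (2 * q).+2)%N by lia.
  have -> : ((2 * q).+2 - 1 = (2 * q).+1)%N by lia.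
  have sym : 'C((2 * q).+1, q) = 'C((2 * q).+1, q.+1).
    by rewrite -bin_sub; [congr 'C(_, _); lia | lia].
  by rewrite /= binS natrD sym; lra.
- case: m => [|q]; first by rewrite /conv /conv_value big_ord1 /cbin /= !bin0 mulr1.
  by rewrite conv_rec conv_value_rec !IH //; lia.
Qed.

Lemma binZ_nat (a b : nat) : binZ a%:Z b%:Z = 'C(a, b)%:R.
Proof. by rewrite /binZ lez_nat /=; case: leqP => // /bin_small ->. Qed.

Lemma binZ_eq0 (a b : int) : (b < 0) || (a < b) -> binZ a b = 0.
Proof. by rewrite /binZ; case: ifP => //; lia. Qed.

Lemma sum_trunc {V : nmodType} {f : nat -> V} {a b : nat} :
  (forall i, (a <= i)%N -> f i = 0) -> (a <= b)%N ->
  \sum_(0 <= i < b) f i = \sum_(0 <= i < a) f i.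
Proof.
move=> f_eq0 hab; rewrite (big_cat_nat _ (n := a)) //= [X in _ + X]big1_seq ?addr0 //.
by move=> i; rewrite mem_index_iota /= => /andP [hi _]; exact: f_eq0.
Qed.

Definition summand (n k i : nat) : rat :=
  (-1) ^+ i / ((n%:Z + 1 - i%:Z)%:~R : rat)
    * binZ (n%:Z + 1 - i%:Z) i%:Z
    * binZ (2 * (n%:Z - k%:Z - i%:Z)) (n%:Z - k%:Z - i%:Z).

Lemma summandE n k i : (k <= n)%N -> (i <= n - k)%N ->
  summand n k i = n.+1%:R^-1 * ((-1) ^+ i * (lucas n.+1 i)%:R * cbin (n - k - i)).
Proof.
move=> hk hi; have hin : (i < n.+1)%N by lia.
rewrite /summand lucasE // /lucas_closed /cbin.
have -> : n%:Z + 1 - i%:Z = (n.+1 - i)%N by lia.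
have -> : n%:Z - k%:Z - i%:Z = (n - k - i)%N by lia.
have -> : 2 * (n - k - i)%N%:Z = (2 * (n - k - i))%N by lia.
rewrite !binZ_nat -[((n.+1 - i)%N%:Z)%:~R]/((n.+1 - i)%:R : rat).
by field; rewrite addrC natr1 !pnatr_eq0; lia.
Qed.

Lemma summand_eq0 n k i :
  (((n + 1)./2).+1 <= i)%N || (n - k < i)%N -> summand n k i = 0.
Proof.
move=> hi; rewrite /summand.
have [big|small] := leqP (((n + 1)./2).+1) i.
  by rewrite (@binZ_eq0 (n%:Z + 1 - i%:Z)) ?mulr0 ?mul0r //; lia.
by rewrite (@binZ_eq0 _ (n%:Z - k%:Z - i%:Z)) ?mulr0 //; lia.
Qed.

Lemma sum_summand n k : (k <= n)%N ->
  \sum_(0 <= i < ((n + 1)./2).+1) summand n k i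
  = (-1) ^+ (n - k) / n.+1%:R * binZ k%:Z (n%:Z - k%:Z).
Proof.
move=> hk; set m := (n - k)%N.
have vanish_high i : (((n + 1)./2).+1 <= i)%N -> summand n k i = 0.
  by move=> hi; apply: summand_eq0; rewrite hi.
have vanish_low i : (m < i)%N -> summand n k i = 0.
  by move=> hi; apply: summand_eq0; rewrite hi orbT.
rewrite -(sum_trunc vanish_high (leq_addr m.+1 _)).
rewrite (sum_trunc vanish_low (leq_addl _ m.+1)) big_mkord.
rewrite (eq_bigr _ (fun (i : 'I_m.+1) _ => @summandE n k i hk (ltn_ord i))) -big_distrr /=.
rewrite -/(conv n.+1 m) conv_valueE /conv_value ltnS leq_subr.
have -> : (n.+1.-1 - m = k)%N by lia.
have -> : n%:Z - k%:Z = m by lia.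
by rewrite binZ_nat mulrA [_^-1 * _]mulrC.
Qed.

Theorem mainTheorem13 (n k : nat) (hk : (k <= n)%N) :
  \sum_(0 <= i < ((n + 1)./2).+1)
     ((-1) ^+ i / ((n%:Z + 1 - i%:Z)%:~R : rat)
        * binZ (n%:Z + 1 - i%:Z) i%:Z
        * binZ (2 * (n%:Z - k%:Z - i%:Z)) (n%:Z - k%:Z - i%:Z))
  = (-1) ^+ (n - k) / (n.+1)%:R * binZ k%:Z (n%:Z - k%:Z)
  /\ ((k.*2 < n)%N ->
      \sum_(0 <= i < ((n + 1)./2).+1)
        ((-1) ^+ i / ((n%:Z + 1 - i%:Z)%:~R : rat)
           * binZ (n%:Z + 1 - i%:Z) i%:Z
           * binZ (2 * (n%:Z - k%:Z - i%:Z)) (n%:Z - k%:Z - i%:Z)) = 0).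
Proof.
have identity := sum_summand n k hk; split => [|small_k]; first exact: identity.
(* when 2k < n, the binomial C(k, n-k) on the right-hand side vanishes *)
rewrite identity (@binZ_eq0 k%:Z) ?mulr0 //; lia.
Qed.
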